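(* Define $\psi:\mathcal{B}_n\to\mathcal{B}_n$ by $\psi(\pi)=\widetilde{\pi}$, where for $i\in[n]$, $\widetilde{\pi}_i=\pi_{n+1-i}-n-1$ if $\pi_{n+1-i}>0$ and $\widetilde{\pi}_i=\pi_{n+1-i}+n+1$ if $\pi_{n+1-i}<0$. Then $\psi$ is a bijection on $\mathcal{B}_n$, and for every $\pi\in\mathcal{B}_n$, $\mathrm{des}_B(\psi(\pi))=n-\mathrm{des}_B(\pi)$.
   Context: $\mathcal{B}_n$ is the group of signed permutations of $[n]$, i.e. bijections $\pi$ of $\{\pm1,\dots,\pm n\}$ with $\pi(-i)=-\pi(i)$, written $\pi=\pi_1\cdots\pi_n$ with $\pi_i=\pi(i)$, integers ordered naturally. Set $\pi_0=0$; $\mathrm{Des}_B(\pi)=\{i\in\{0,1,\dots,n-1\}:\pi_i>\pi_{i+1}\}$ and $\mathrm{des}_B(\pi)=|\mathrm{Des}_B(\pi)|$. *)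

From mathcomp Require Import all_boot all_order all_algebra.
Set Implicit Arguments. Unset Strict Implicit. Unset Printing Implicit Defensive.
Import Order.TTheory GRing.Theory Num.Theory.
Local Open Scope ring_scope.

(* A signed permutation pi of [n] is recorded by its window
   pi_1 ... pi_n, stored as p : {ffun 'I_n -> int} with p i = pi_(i+1).
   The window determines pi (pi(-i) = -pi(i)); a word is the window of a
   signed permutation iff each entry is a nonzero integer of absolute value
   at most n and the absolute values are pairwise distinct. *)
Definition signed_perm (n : nat) (p : {ffun 'I_n -> int}) : bool :=
  [forall i, (p i != 0) && (absz (p i) <= n)%N]
  && injectiveb (fun i => absz (p i)).

(* pi_k for k in {0,...,n}, with pi_0 = 0 (1-indexed positions). *)
Definition pival (n : nat) (p : {ffun 'I_n -> int}) (k : nat) : int :=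
  if k is k'.+1 then (if @insub _ (fun j => (j < n)%N) 'I_n k' is Some i then p i else 0) else 0.

Definition DesB (n : nat) (p : {ffun 'I_n -> int}) : {set 'I_n} :=
  [set i : 'I_n | pival p (nat_of_ord i).+1 < pival p i].

Definition desB (n : nat) (p : {ffun 'I_n -> int}) : nat := #|DesB p|.

Definition psi (n : nat) (p : {ffun 'I_n -> int}) : {ffun 'I_n -> int} :=
  [ffun i : 'I_n => let x := p (rev_ord i) in
     if 0 < x then x - (n.+1)%:Z else x + (n.+1)%:Z].

From mathcomp Require Import all_boot all_order all_algebra zify.
Import Order.TTheory.
Local Open Scope ring_scope.

(* psi reverses the window and replaces each entry x by x - (n+1) or
   x + (n+1) according to its sign.  This keeps the relative order of two
   entries of the same sign and reverses it for entries of opposite signs, so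
   for 1 <= i < n, with x = pi_(n-i) and y = pi_(n+1-i),
     [psi(pi)_(i+1) < psi(pi)_i] + [y > 0] = [x < y] + [x > 0].
   Summed over i, the sign terms telescope to [pi_n > 0] and [pi_1 > 0], which
   are exactly the contributions of position 0: psi(pi) descends there iff
   pi_n > 0, and pi ascends there iff pi_1 > 0.  Hence
   des_B(psi(pi)) = asc_B(pi) = n - des_B(pi), the last because consecutive
   entries of 0, pi_1, ..., pi_n differ.  Finally psi is an involution. *)

Definition signed_entry (n : nat) (x : int) : bool := (x != 0) && (absz x <= n)%N.

Lemma signed_permP (n : nat) (p : {ffun 'I_n -> int}) :
  reflect ((forall i, signed_entry n (p i)) /\ injective (fun i => absz (p i)))
          (signed_perm p).
Proof.
by apply: (iffP andP) => [[/forallP h /injectiveP]|[h /injectiveP]]; split=> //;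
   apply/forallP.
Qed.

Section PsiEntry.

Variable n : nat.

Definition psi_entry (x : int) : int :=
  if 0 < x then x - (n.+1)%:Z else x + (n.+1)%:Z.

Lemma psi_entry_signed (x : int) :
  signed_entry n x -> signed_entry n (psi_entry x).
Proof. by rewrite /signed_entry /psi_entry; case: ltP; lia. Qed.

Lemma absz_psi_entry (x : int) :
  signed_entry n x -> absz (psi_entry x) = (n.+1 - absz x)%N.
Proof. by rewrite /signed_entry /psi_entry; case: ltP; lia. Qed.

Lemma psi_entryK (x : int) : signed_entry n x -> psi_entry (psi_entry x) = x.
Proof. by rewrite /signed_entry /psi_entry; case: (ltP 0 x); case: ifP; lia. Qed.

Lemma psi_entry_lt0 (x : int) : signed_entry n x -> (psi_entry x < 0) = (0 < x).
Proof. by rewrite /signed_entry /psi_entry; case: (ltP 0 x); lia. Qed.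

Lemma psi_entry_lt (x y : int) : signed_entry n x -> signed_entry n y ->
  ((psi_entry x < psi_entry y)%R + (0 < y)%R = (x < y)%R + (0 < x)%R)%N.
Proof.
rewrite /signed_entry /psi_entry => /andP[? ?] /andP[? ?].
by case: (ltP 0 x) => ?; case: (ltP 0 y) => ?; case: (ltP x y) => ?;
   case: ltP => ? /=; lia.
Qed.

End PsiEntry.

Lemma psiE {n : nat} (p : {ffun 'I_n -> int}) (i : 'I_n) :
  psi p i = psi_entry n (p (rev_ord i)).
Proof. by rewrite ffunE. Qed.

Lemma psi_signed_perm {n : nat} (p : {ffun 'I_n -> int}) :
  signed_perm p -> signed_perm (psi p).
Proof.
move=> /signed_permP[hp injp]; apply/signed_permP; split=> [i|i j].
  by rewrite psiE psi_entry_signed.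
rewrite !psiE !absz_psi_entry // => eq_ij; apply: rev_ord_inj; apply: injp.
by have := hp (rev_ord i); have := hp (rev_ord j); rewrite /signed_entry; lia.
Qed.

Lemma psiK {n : nat} (p : {ffun 'I_n -> int}) : signed_perm p -> psi (psi p) = p.
Proof.
by move=> /signed_permP[hp _]; apply/ffunP => i; rewrite !psiE rev_ordK psi_entryK.
Qed.

Lemma sumn_telescope_balance (m : nat) (u v s : nat -> nat) :
  (forall i, (i < m)%N -> u i + s i.+1 = v i + s i)%N ->
  (\sum_(i < m) u i + s m = \sum_(i < m) v i + s 0)%N.
Proof.
elim: m => [|m IH] h; first by rewrite !big_ord0.
rewrite !big_ord_recr /=.
rewrite -addnA h // addnCA IH => [|i lt_im]; last exact/h/ltnW.
by rewrite addnCA addnA.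
Qed.

Lemma sum_des_shifted_reversal (n : nat) (a b : nat -> int) :
  a 0%N = 0 -> b 0%N = 0 ->
  (forall k, (0 < k <= n)%N -> signed_entry n (a k)) ->
  (forall k, (0 < k <= n)%N -> b k = psi_entry n (a (n.+1 - k)%N)) ->
  (\sum_(i < n) (b i.+1 < b i)%R = \sum_(i < n) (a i < a i.+1)%R)%N.
Proof.
case: n => [|m] a0 b0 ha hb; first by rewrite !big_ord0.
rewrite !big_ord_recl a0 b0 (reindex_inj rev_ord_inj).
under eq_bigr do rewrite !lift0.
under [in RHS]eq_bigr do rewrite lift0.
rewrite /= hb ?leqnn // subSS subn0 psi_entry_lt0 ?ha ?leqnn //.
have hb_rev (i : 'I_m) : (b (m - i.+1).+2 < b (m - i.+1).+1)
    = (psi_entry m.+1 (a i.+1) < psi_entry m.+1 (a i.+2)).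
  have lt_im := ltn_ord i.
  rewrite !hb; try lia.
  have -> : (m.+2 - (m - i.+1).+2 = i.+1)%N by lia.
  by have -> : (m.+2 - (m - i.+1).+1 = i.+2)%N by lia.
under eq_bigr do rewrite hb_rev.
rewrite addnC [RHS]addnC.
apply: (@sumn_telescope_balance m
  (fun i => psi_entry m.+1 (a i.+1) < psi_entry m.+1 (a i.+2))%R
  (fun i => a i.+1 < a i.+2)%R (fun i => 0 < a i.+1)%R) => i lt_im.
by apply: psi_entry_lt; apply: ha; lia.
Qed.

Lemma card_set_sumn (T : finType) (P : pred T) : #|[set x | P x]| = (\sum_x P x)%N.
Proof. by rewrite -sum1dep_card big_mkcond; apply: eq_bigr => x _; case: (P x). Qed.

Lemma pivalS {n : nat} (p : {ffun 'I_n -> int}) (i : 'I_n) : pival p i.+1 = p i.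
Proof.
rewrite /pival; case: insubP => [j _ val_j|]; last by rewrite ltn_ord.
by congr (p _); apply: val_inj.
Qed.

Section Window.

Variables (n : nat) (p : {ffun 'I_n -> int}).

Definition AscB : {set 'I_n} := [set i : 'I_n | pival p i < pival p i.+1].

Lemma pival_psi (k : nat) : (0 < k <= n)%N ->
  pival (psi p) k = psi_entry n (pival p (n.+1 - k)).
Proof.
case: k => [|k] // /andP[_ lt_kn].
rewrite (pivalS (psi p) (Ordinal lt_kn)) psiE -pivalS.
by congr (psi_entry _ (pival _ _)) => /=; lia.
Qed.

Hypothesis p_signed : signed_perm p.

Lemma pival_signed (k : nat) : (0 < k <= n)%N -> signed_entry n (pival p k).
Proof.
case/signed_permP: p_signed => hp _.
by case: k => [|k] // /andP[_ lt_kn]; rewrite (pivalS p (Ordinal lt_kn)).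
Qed.

Lemma pival_neq (i : nat) : (i < n)%N -> pival p i != pival p i.+1.
Proof.
case: i => [|i] lt_in.
  by rewrite eq_sym; case/andP: (@pival_signed 1 lt_in).
case/signed_permP: p_signed => _ injp.
rewrite (pivalS p (Ordinal (ltnW lt_in))) (pivalS p (Ordinal lt_in)).
apply/eqP => /(congr1 absz)/injp/(congr1 val) /=; lia.
Qed.

Lemma AscB_DesBC : AscB = ~: DesB p.
Proof.
apply/setP => i; rewrite !inE.
by have := @pival_neq i (ltn_ord i); case: ltgtP.
Qed.

Lemma card_AscB : #|AscB| = (n - desB p)%N.
Proof. by rewrite AscB_DesBC cardsCs setCK card_ord. Qed.

Lemma desB_psi : desB (psi p) = #|AscB|.
Proof.
rewrite /desB /DesB /AscB !card_set_sumn.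
apply: (@sum_des_shifted_reversal n (pival p) (pival (psi p))) => //.
- exact: pival_signed.
- exact: pival_psi.
Qed.

End Window.

Theorem lemma2p1 (n : nat) :
  (forall p, signed_perm p -> signed_perm (@psi n p)) /\
  (forall p q, signed_perm p -> signed_perm q -> @psi n p = psi q -> p = q) /\
  (forall q, signed_perm q -> exists2 p, signed_perm p & @psi n p = q) /\
  (forall p, signed_perm p -> desB (@psi n p) = (n - desB p)%N).
Proof.
split; first exact: psi_signed_perm.
split; first by move=> p q hp hq psi_pq; rewrite -(psiK p hp) -(psiK q hq) psi_pq.
split; first by move=> q hq; exists (psi q); [exact: psi_signed_perm | exact: psiK].
by move=> p hp; rewrite desB_psi // card_AscB.
Qed.
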